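(* Let $X_1,\dots,X_n$ be arbitrary (possibly dependent) random variables with values in $[0,1]$, let $m\ge 2$ be an integer and $p\in[0,1]$ such that $\mathbb{E}\prod_{i\in A}X_i\le p^{|A|}$ for every $A\subseteq[n]$ with $|A|\le m$. If $m\le np$, then $$\mathbb{E}\Big(\sum_{i=1}^n X_i\Big)^m\le(2e^2np)^m,$$ and consequently $\Pr\big(\sum_i X_i\ge\alpha np\big)\le\big(\frac{2e^2}{\alpha}\big)^m$ for every $\alpha>0$. *)

From HB Require Import structures.
From mathcomp Require Import all_boot all_order all_algebra.
From mathcomp Require Import all_classical all_reals all_analysis.

From HB Require Import structures.
From mathcomp Require Import all_boot all_order all_algebra.
From mathcomp Require Import all_classical all_reals all_analysis.
From mathcomp Require Import ring lra measurable_realfun.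
Import Order.TTheory GRing.Theory Num.Theory.
Local Open Scope classical_set_scope.
Local Open Scope ring_scope.

(* Write S = X_1 + ... + X_n and X_B = \prod_(i in B) X_i.  The heart of the
   proof is the bound on the mixed moments
       E[S^j X_B] <= (2np)^j p^|B|        whenever |B| + j <= m,
   proved by induction on j.  Expanding one factor, S^(j+1) X_B is the sum over
   x of X_x S^j X_B.  If x is in B the extra factor X_x <= 1 can be dropped,
   giving the bound for (j, B); otherwise X_x X_B = X_(B + x), giving the bound
   for (j, B + x), which carries an extra factor p.  Summing, the n terms are at
   most (|B| + np) times the bound for (j, B), and |B| <= m <= np.
   With B empty and j = m this yields E[S^m] <= (2np)^m <= (2e^2 np)^m; the tail
   bound is then Markov's inequality applied to S^m at level alpha n p. *)

Section MixedMoments.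
Context {d : measure_display} {T : measurableType d} {R : realType}
  {P : probability T R} {n : nat} (X : 'I_n -> {RV P >-> R}).
Hypothesis X_unit : forall i w, 0 <= X i w <= 1.

Definition sumX (w : T) : R := \sum_(i < n) X i w.
Definition prodX (B : {set 'I_n}) (w : T) : R := \prod_(i in B) X i w.
Definition mixed (j : nat) (B : {set 'I_n}) (w : T) : R :=
  sumX w ^+ j * prodX B w.

Lemma X_ge0 i w : 0 <= X i w. Proof. by case/andP: (X_unit i w). Qed.

Lemma X_le1 i w : X i w <= 1. Proof. by case/andP: (X_unit i w). Qed.

Lemma sumX_ge0 w : 0 <= sumX w.
Proof. by apply: sumr_ge0 => i _; exact: X_ge0. Qed.

Lemma mixed_ge0 j B w : 0 <= mixed j B w.
Proof.
by rewrite mulr_ge0 ?exprn_ge0 ?sumX_ge0 ?prodr_ge0 // => i _; exact: X_ge0.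
Qed.

Lemma measurable_sumX : measurable_fun setT sumX.
Proof. by apply: measurable_sum => i; exact: measurable_funP. Qed.

Lemma measurable_prodX B : measurable_fun setT (prodX B).
Proof.
rewrite /prodX; under [X in measurable_fun _ X]funext do rewrite -big_enum.
by apply: measurable_prod => i _; exact: measurable_funP.
Qed.

Lemma measurable_mixed j B : measurable_fun setT (mixed j B).
Proof.
apply: measurable_funM; [exact/measurable_funX/measurable_sumX|].
exact: measurable_prodX.
Qed.

Lemma measurable_X_mixed x j B :
  measurable_fun setT (fun w => X x w * mixed j B w).
Proof.
by apply: measurable_funM; [exact: measurable_funP|exact: measurable_mixed].
Qed.

Lemma expectation_mixedS j B :
  ('E_P[mixed j.+1 B] = \sum_(x < n) 'E_P[fun w => (X x w * mixed j B w)%R])%E.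
Proof.
have -> : mixed j.+1 B = (fun w => \sum_(x < n) X x w * mixed j B w).
  by apply: funext => w; rewrite /mixed exprS -mulrA mulr_suml.
rewrite expectation.unlock; under eq_integral do rewrite -sumEFin.
rewrite ge0_integral_sum // => [x|x w _].
  exact/measurable_EFinP/measurable_X_mixed.
by rewrite lee_fin mulr_ge0 ?X_ge0 ?mixed_ge0.
Qed.

Lemma expectation_mixed_absorb j B x :
  ('E_P[fun w => (X x w * mixed j B w)%R] <= 'E_P[mixed j B])%E.
Proof.
apply: expectation_le; [exact: measurable_X_mixed|exact: measurable_mixed| | |].
- by move=> w; rewrite mulr_ge0 ?X_ge0 ?mixed_ge0.
- exact: mixed_ge0.
- by apply: aeW => w; rewrite ler_piMl ?mixed_ge0 ?X_le1.
Qed.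

Lemma mixed_extend j (B : {set 'I_n}) x : x \notin B ->
  (fun w => X x w * mixed j B w) = mixed j (x |: B).
Proof.
by move=> xB; apply: funext => w; rewrite /mixed /prodX big_setU1 //= mulrCA.
Qed.

Section MomentBound.
Context {m : nat} {p : R}.
Hypothesis p_ge0 : 0 <= p.
Hypothesis moment_hyp : forall A : {set 'I_n}, (#|A| <= m)%N ->
  ('E_P[prodX A] <= (p ^+ #|A|)%:E)%E.
Hypothesis m_le_np : m%:R <= n%:R * p.

Lemma mixed_moment_bound j (B : {set 'I_n}) : (#|B| + j <= m)%N ->
  ('E_P[mixed j B] <= ((2 * n%:R * p) ^+ j * p ^+ #|B|)%:E)%E.
Proof.
elim: j B => [|j IH] B hB.
  have -> : mixed 0 B = prodX B by apply: funext => w; rewrite /mixed mul1r.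
  by rewrite mul1r; apply: moment_hyp; rewrite addn0 in hB.
set a := (2 * n%:R * p) ^+ j * p ^+ #|B|.
have a_ge0 : 0 <= a by rewrite mulr_ge0 ?exprn_ge0 ?mulr_ge0.
have term_bound x : ('E_P[fun w => (X x w * mixed j B w)%R]
    <= (a * ((x \in B)%:R + p))%:E)%E.
  have [xB|xB] := boolP (x \in B).
    apply: (le_trans (expectation_mixed_absorb _ _ _)).
    apply: (le_trans (IH _ _)); first by apply: ltnW; rewrite -addnS.
    by rewrite lee_fin ler_peMr // lerDl.
  rewrite mixed_extend //; apply: (le_trans (IH _ _)).
    by rewrite cardsU1 xB add1n addSn -addnS.
  by rewrite cardsU1 xB add1n exprS add0r lee_fin /a mulrCA mulrC.
rewrite expectation_mixedS.
apply: (le_trans (y := (\sum_(x < n) (a * ((x \in B)%:R + p))%:E)%E)).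
  by apply: lee_sum => x _; exact: term_bound.
rewrite sumEFin lee_fin -mulr_sumr big_split /= sumr_const card_ord.
have -> : \sum_(x < n) ((x \in B)%:R : R) = #|B|%:R.
  rewrite (eq_bigr (fun x => if x \in B then 1 else 0)) => [|x _].
    by rewrite -big_mkcond sumr_const.
  by case: (x \in B).
have card_le_np : #|B|%:R <= n%:R * p.
  by apply: le_trans m_le_np; rewrite ler_nat (leq_trans _ hB) ?leq_addr.
rewrite exprS -mulrA -/a [_ * a]mulrC; apply: ler_wpM2l => //.
by rewrite -[p *+ n]mulr_natl -mulrA [2 * _]mulr_natl mulr2n lerD2r.
Qed.

Lemma sumX_moment_bound :
  ('E_P[fun w => (sumX w ^+ m)%R] <= ((2 * n%:R * p) ^+ m)%:E)%E.
Proof.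
have -> : (fun w => sumX w ^+ m) = mixed m (finset.set0 : {set 'I_n}).
  by apply: funext => w; rewrite /mixed /prodX big_set0 mulr1.
by have := @mixed_moment_bound m finset.set0; rewrite cards0 expr0 mulr1; apply.
Qed.

End MomentBound.

End MixedMoments.

Lemma power_markov (d : measure_display) (T : measurableType d) (R : realType)
    (P : probability T R) (f : T -> R) (m : nat) (c : R) :
  measurable_fun setT f -> (forall w, 0 <= f w) -> 0 < c ->
  (P [set w | (c <= f w)%R] <= (c ^- m)%:E * 'E_P[fun w => (f w ^+ m)%R])%E.
Proof.
move=> mf f_ge0 c_gt0.
pose F : {RV P >-> R} := mfun_Sub (mem_set mf).
have := @markov _ _ _ P F (fun x => x ^+ m) c c_gt0
  (measurable_funX _ (@measurable_id _ _ setT))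
  (fun r r0 => exprn_ge0 _ r0) (@lerXn2r R m).
have -> : [set w | (c%:E <= `|(F w)%:E|)%E] = [set w | c <= f w].
  by apply/seteqP; split => w /=; rewrite lee_fin ger0_norm.
have -> : (fun x => x ^+ m) \o Num.norm \o F = (fun w => f w ^+ m).
  by apply: funext => w /=; rewrite ger0_norm.
by rewrite lee_pdivlMl ?exprn_gt0.
Qed.

Theorem mainTheorem6 (d : measure_display) (T : measurableType d)
  (R : realType) (P : probability T R) (n m : nat)
  (X : 'I_n -> {RV P >-> R}) (p : R)
  (hX : forall i w, 0 <= X i w <= 1)
  (hm : (2 <= m)%N) (hp : 0 <= p <= 1)
  (hmom : forall A : {set 'I_n}, (#|A| <= m)%N ->
     ('E_P[fun w => (\prod_(i in A) X i w)%R] <= (p ^+ #|A|)%:E)%E)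
  (hmnp : m%:R <= n%:R * p) :
  ('E_P[fun w => ((\sum_(i < n) X i w) ^+ m)%R]
     <= ((2 * expR 1 ^+ 2 * n%:R * p) ^+ m)%:E)%E
  /\ (forall alpha : R, 0 < alpha ->
       (P [set w | (alpha * n%:R * p <= \sum_(i < n) X i w)%R]
          <= ((2 * expR 1 ^+ 2 / alpha) ^+ m)%:E)%E).
Proof.
have [p_ge0 _] := andP hp.
have np_gt0 : 0 < n%:R * p.
  by apply: lt_le_trans hmnp; rewrite ltr0n (leq_trans _ hm).
have e2_ge1 : 1 <= expR 1 ^+ 2 :> R.
  by rewrite exprn_ege1 //; have := expR_ge1Dx (1 : R); lra.
have moment : ('E_P[fun w => (sumX X w ^+ m)%R]
    <= ((2 * expR 1 ^+ 2 * n%:R * p) ^+ m)%:E)%E.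
  apply: (le_trans (sumX_moment_bound X hX p_ge0 hmom hmnp)).
  by rewrite lee_fin lerXn2r ?nnegrE; nra.
split => // alpha alpha_gt0.
have c_gt0 : 0 < alpha * n%:R * p by rewrite -mulrA mulr_gt0.
apply: (le_trans (@power_markov _ _ _ P _ m _ (measurable_sumX X)
  (sumX_ge0 X hX) c_gt0)).
apply: (le_trans (lee_wpmul2l _ moment)).
  by rewrite lee_fin invr_ge0 exprn_ge0 // ltW.
rewrite -EFinM lee_fin -exprVn -exprMn.
suff -> : (alpha * n%:R * p)^-1 * (2 * expR 1 ^+ 2 * n%:R * p)
    = 2 * expR 1 ^+ 2 / alpha by [].
field; rewrite (gt_eqF alpha_gt0) /= -negb_or -mulf_eq0 mulrC.
by rewrite gt_eqF.
Qed.
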